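(* Let $c>0$ and let $K=K(L)$ be positive integers with $K/L\to c$ as $L\to\infty$. With $$s^*(K,L)=\frac{L\,(K-1)^{L}}{K^{L+1}-(K-1)^{L-1}\big((K-1)K+L\big)},$$ $$\Pi_P=(1-s^* )\Big(1-\big(1-\tfrac{1}{K}\big)^L\Big),\qquad \Pi_R=s^*\,\frac{K}{L}\Big(1-\big(1-\tfrac{1}{K}\big)^L\Big),$$ one has, as $L\to\infty$, $$s^*\to\frac{1}{c\,(e^{1/c}-1)},\qquad \Pi_P\to 1-\frac{c+1}{c\,e^{1/c}},\qquad \Pi_R\to e^{-1/c}.$$
   Context: Here $s^*(K,L)$ is the common offer of the $K$ proposers in the subgame-perfect Nash equilibrium of the Multi-Proposer-Multi-Responder Ultimatum Game with $K$ proposers and $L$ responders (responders playing the evolutionarily stable strategy, which selects each proposer with probability $1/K$), and $\Pi_P,\Pi_R$ are the resulting expected payoffs of a proposer and of a responder. *)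

From Stdlib Require Import Reals.
From Coquelicot Require Import Coquelicot.
Open Scope R_scope.

Definition sstar (K L : nat) : R :=
  INR L * (INR K - 1) ^ L /
  (INR K ^ (L + 1) - (INR K - 1) ^ (L - 1) * ((INR K - 1) * INR K + INR L)).

(* probability that a given proposer is selected by at least one responder *)
Definition sel (K L : nat) : R := 1 - (1 - 1 / INR K) ^ L.

Definition PiP (K L : nat) : R := (1 - sstar K L) * sel K L.

Definition PiR (K L : nat) : R := sstar K L * (INR K / INR L) * sel K L.

From Stdlib Require Import Reals Lra Lia.
From Coquelicot Require Import Coquelicot.
Open Scope R_scope.

(* Write q = 1 - 1/K.  Dividing numerator and denominator by K^(L+1) gives
   s* = (L/K) q^L / (1 - q^L - q^(L-1) (L/K) (1/K)).  Since 1 - x <= e^-x and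
   e^(-x/(1-x)) <= 1 - x, the power q^L lies between e^(-(L/K)/q) and e^(-L/K),
   so q^L -> e^(-1/c); and K -> oo, so q -> 1 and (L/K)(1/K) -> 0.  All three
   limits then follow by continuity of the arithmetic operations. *)

Lemma is_lim_seq_exp (u : nat -> R) (l : R) :
  is_lim_seq u l -> is_lim_seq (fun n => exp (u n)) (exp l).
Proof.
  intros Hu. apply (filterlim_comp _ _ _ u exp eventually (locally l)); [exact Hu|].
  apply continuous_exp.
Qed.

Lemma exp_pow (x : R) (n : nat) : exp x ^ n = exp (INR n * x).
Proof.
  induction n as [|n IH].
  - simpl. rewrite Rmult_0_l, exp_0. reflexivity.
  - rewrite S_INR. simpl pow. rewrite IH, <- exp_plus. f_equal. ring.
Qed.

Lemma exp_gt_1 (x : R) : 0 < x -> 1 < exp x.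
Proof. intros Hx. rewrite <- exp_0. apply exp_increasing. exact Hx. Qed.

Lemma one_sub_le_exp_opp (x : R) : 1 - x <= exp (- x).
Proof. pose proof (exp_ineq1_le (- x)). lra. Qed.

Lemma exp_opp_div_one_sub_le (x : R) : x < 1 -> exp (- (x / (1 - x))) <= 1 - x.
Proof.
  intros Hx.
  pose proof (exp_ineq1_le (x / (1 - x))) as Hle.
  pose proof (exp_pos (x / (1 - x))) as Hpos.
  rewrite exp_Ropp.
  apply (Rmult_le_reg_r (exp (x / (1 - x)))); [exact Hpos|].
  rewrite Rinv_l by lra.
  replace 1 with ((1 - x) * (1 + x / (1 - x))) at 1 by (field; lra).
  apply Rmult_le_compat_l; lra.
Qed.

Lemma one_sub_pow_bounds (x : R) (n : nat) : 0 <= x < 1 ->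
  exp (- (INR n * x / (1 - x))) <= (1 - x) ^ n <= exp (- (INR n * x)).
Proof.
  intros Hx. split.
  - replace (- (INR n * x / (1 - x))) with (INR n * - (x / (1 - x))) by (field; lra).
    rewrite <- exp_pow. apply pow_incr.
    split; [apply Rlt_le, exp_pos | apply exp_opp_div_one_sub_le; lra].
  - replace (- (INR n * x)) with (INR n * - x) by ring.
    rewrite <- exp_pow. apply pow_incr.
    split; [lra | apply one_sub_le_exp_opp].
Qed.

Lemma sstar_eq (K L : nat) : (1 < K)%nat ->
  let q := 1 - 1 / INR K in
  sstar K L =
  (INR L / INR K) * q ^ L / (1 - q ^ L - q ^ L / q * ((INR L / INR K) * (1 / INR K))).
Proof.
  intros HK q.
  assert (Hk : 1 < INR K) by (apply lt_1_INR; exact HK).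
  assert (Hq : q <> 0).
  { replace q with ((INR K - 1) / INR K) by (unfold q; field; lra).
    unfold Rdiv. apply Rmult_integral_contrapositive_currified; [lra | apply Rinv_neq_0_compat; lra]. }
  unfold sstar. destruct L as [|m].
  - simpl. unfold Rdiv. rewrite !Rmult_0_l. reflexivity.
  - replace (S m + 1)%nat with (S (S m)) by lia.
    replace (S m - 1)%nat with m by lia.
    replace (INR K - 1) with (INR K * q) by (unfold q; field; lra).
    rewrite !Rpow_mult_distr.
    rewrite <- (Rdiv_mult_l_l (INR K ^ S (S m)) _ (_ - _ - _)) by (apply pow_nonzero; lra).
    f_equal; simpl pow; field; repeat split; lra.
Qed.

Section Limits.

Variables (c : R) (K : nat -> nat).
Hypothesis c_pos : 0 < c.
Hypothesis K_div_L_lim : is_lim_seq (fun L => INR (K L) / INR L) c.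

Lemma K_lim : is_lim_seq (fun L => INR (K L)) p_infty.
Proof.
  apply is_lim_seq_ext_loc with (fun L => INR (K L) / INR L * INR L).
  { exists 1%nat. intros n Hn. field. apply not_0_INR. lia. }
  apply (is_lim_seq_mult _ _ c p_infty); [exact K_div_L_lim | exact is_lim_seq_INR |].
  apply is_Rbar_mult_sym, is_Rbar_mult_p_infty_pos. exact c_pos.
Qed.

Lemma K_gt1_eventually : eventually (fun L => (1 < K L)%nat).
Proof.
  destruct (proj2 (is_lim_seq_spec _ _) K_lim 1) as [N HN].
  exists N. intros n Hn. apply INR_lt. exact (HN n Hn).
Qed.

Lemma inv_K_lim : is_lim_seq (fun L => 1 / INR (K L)) 0.
Proof.
  apply is_lim_seq_ext with (fun L => / INR (K L)).
  { intros n. unfold Rdiv. ring. }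
  exact (is_lim_seq_inv _ _ K_lim ltac:(discriminate)).
Qed.

Lemma L_div_K_lim : is_lim_seq (fun L => INR L / INR (K L)) (1 / c).
Proof.
  apply is_lim_seq_ext with (fun L => / (INR (K L) / INR L)).
  { intros n. unfold Rdiv. rewrite Rinv_mult, Rinv_inv. ring. }
  replace (1 / c) with (/ c) by (field; lra).
  apply (is_lim_seq_inv _ _ K_div_L_lim). intros E. injection E. lra.
Qed.

Lemma q_lim : is_lim_seq (fun L => 1 - 1 / INR (K L)) 1.
Proof.
  pose proof (is_lim_seq_minus' _ _ _ _ (is_lim_seq_const 1) inv_K_lim) as H.
  rewrite Rminus_0_r in H. exact H.
Qed.

Lemma q_pow_lim : is_lim_seq (fun L => (1 - 1 / INR (K L)) ^ L) (exp (- (1 / c))).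
Proof.
  assert (HLK : is_lim_seq (fun L => INR L * (1 / INR (K L))) (1 / c)).
  { apply is_lim_seq_ext with (fun L => INR L / INR (K L)); [intros n; unfold Rdiv; ring|].
    exact L_div_K_lim. }
  apply is_lim_seq_le_le_loc with
    (fun L => exp (- (INR L * (1 / INR (K L)) / (1 - 1 / INR (K L)))))
    (fun L => exp (- (INR L * (1 / INR (K L))))).
  - destruct K_gt1_eventually as [N HN]. exists N. intros n Hn.
    apply one_sub_pow_bounds.
    assert (Hk : 1 < INR (K n)) by (apply lt_1_INR; exact (HN n Hn)).
    split; [apply Rlt_le, Rdiv_lt_0_compat; lra|].
    apply (Rmult_lt_reg_r (INR (K n))); [lra|]. field_simplify; lra.
  - apply is_lim_seq_exp.
    replace (- (1 / c)) with (- (1 / c / 1)) by (field; lra).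
    exact (proj1 (is_lim_seq_opp _ _) (is_lim_seq_div' _ _ _ _ HLK q_lim ltac:(lra))).
  - apply is_lim_seq_exp. exact (proj1 (is_lim_seq_opp _ _) HLK).
Qed.

Lemma sel_lim : is_lim_seq (fun L => sel (K L) L) (1 - exp (- (1 / c))).
Proof. exact (is_lim_seq_minus' _ _ _ _ (is_lim_seq_const 1) q_pow_lim). Qed.

Lemma sstar_lim : is_lim_seq (fun L => sstar (K L) L) (1 / (c * (exp (1 / c) - 1))).
Proof.
  apply is_lim_seq_ext_loc with
    (fun L => (INR L / INR (K L)) * (1 - 1 / INR (K L)) ^ L /
      (1 - (1 - 1 / INR (K L)) ^ L - (1 - 1 / INR (K L)) ^ L / (1 - 1 / INR (K L))
           * ((INR L / INR (K L)) * (1 / INR (K L))))).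
  { destruct K_gt1_eventually as [N HN]. exists N. intros n Hn.
    symmetry. exact (sstar_eq _ _ (HN n Hn)). }
  set (e := exp (- (1 / c))).
  assert (HE : 1 < exp (1 / c)) by (apply exp_gt_1, Rdiv_lt_0_compat; lra).
  assert (He : e = / exp (1 / c)) by apply exp_Ropp.
  replace (1 / (c * (exp (1 / c) - 1)))
    with (1 / c * e / (1 - e - e / 1 * (1 / c * 0))) by (rewrite He; field; lra).
  apply is_lim_seq_div'.
  - exact (is_lim_seq_mult' _ _ _ _ L_div_K_lim q_pow_lim).
  - apply is_lim_seq_minus'; [exact sel_lim|].
    apply is_lim_seq_mult'.
    + exact (is_lim_seq_div' _ _ _ _ q_pow_lim q_lim ltac:(lra)).
    + exact (is_lim_seq_mult' _ _ _ _ L_div_K_lim inv_K_lim).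
  - rewrite !Rmult_0_r, Rminus_0_r, He.
    pose proof (Rinv_1_lt_contravar 1 _ (Rle_refl 1) HE) as Hinv.
    rewrite Rinv_1 in Hinv. lra.
Qed.

End Limits.

Theorem mainTheorem5 (c : R) (K : nat -> nat) :
  0 < c ->
  (forall L : nat, (0 < K L)%nat) ->
  is_lim_seq (fun L : nat => INR (K L) / INR L) c ->
  is_lim_seq (fun L : nat => sstar (K L) L) (1 / (c * (exp (1 / c) - 1))) /\
  is_lim_seq (fun L : nat => PiP (K L) L) (1 - (c + 1) / (c * exp (1 / c))) /\
  is_lim_seq (fun L : nat => PiR (K L) L) (exp (- (1 / c))).
Proof.
  intros Hc _ Hlim.
  pose proof (sstar_lim c K Hc Hlim) as Hs.
  pose proof (sel_lim c K Hc Hlim) as Hsel.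
  assert (HE : 1 < exp (1 / c)) by (apply exp_gt_1, Rdiv_lt_0_compat; lra).
  rewrite exp_Ropp in Hsel |- *.
  set (E := exp (1 / c)) in *.
  split; [exact Hs | split].
  - replace (1 - (c + 1) / (c * E)) with ((1 - 1 / (c * (E - 1))) * (1 - / E))
      by (field; lra).
    apply is_lim_seq_mult'; [|exact Hsel].
    exact (is_lim_seq_minus' _ _ _ _ (is_lim_seq_const 1) Hs).
  - replace (/ E) with (1 / (c * (E - 1)) * c * (1 - / E)) at 1 by (field; lra).
    apply is_lim_seq_mult'; [|exact Hsel].
    exact (is_lim_seq_mult' _ _ _ _ Hs Hlim).
Qed.
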